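(* Let $b\ge2$ be an integer. (1) For any nonempty subset $S$ of $\mathbb{Z}$, the $b$-exponent sequence $(\alpha_k(S,b))_{k=0}^\infty$ is weakly increasing: $\alpha_{k+1}(S,b)\ge\alpha_k(S,b)$ for all $k\ge0$. (2) For any nonempty subset $S$ of $\mathbb{Z}$ and any nonnegative integers $k,\ell$, $\alpha_{k+\ell}(S,b)\ge\alpha_k(S,b)+\alpha_\ell(S,b)$. (3) If $S_1\subseteq S_2\subseteq\mathbb{Z}$ with $S_1$ nonempty, then $\alpha_k(S_1,b)\ge\alpha_k(S_2,b)$ for every $k\ge0$.
   Context: For $b\ge2$ and $a\in\mathbb{Z}$, $\operatorname{ord}_b(a)$ is the largest $k\in\mathbb{N}$ with $b^k\mid a$ ($+\infty$ for $a=0$). For nonempty $S\subseteq\mathbb{Z}$, a $b$-ordering of $S$ is a sequence $(a_i)_{i\ge0}$ in $S$ such that for each $i\ge1$, $a_i$ attains $\min_{a'\in S}\sum_{j=0}^{i-1}\operatorname{ord}_b(a'-a_j)$; the $b$-exponent sequence of $S$ is $\alpha_k(S,b):=\sum_{j=0}^{k-1}\operatorname{ord}_b(a_k-a_j)$ for any $b$-ordering (independent of the choice). *)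

From mathcomp Require Import all_boot all_order all_algebra.
Set Implicit Arguments. Unset Strict Implicit. Unset Printing Implicit Defensive.
Import Order.TTheory GRing.Theory Num.Theory.

Inductive enat := Fin of nat | Inf.

Definition eadd (x y : enat) : enat :=
  match x, y with Fin m, Fin n => Fin (m + n) | _, _ => Inf end.

Definition ele (x y : enat) : bool :=
  match x, y with
  | _, Inf => true
  | Inf, Fin _ => false
  | Fin m, Fin n => (m <= n)%N
  end.

(* ord_b(a): the largest k with b^k | a, and +oo for a = 0.
   For a <> 0 any such k satisfies k <= |a| (since b >= 2), so the
   maximum over k < |a|+1 is the largest such k. *)
Definition ord_b (b : nat) (a : int) : enat :=
  if a == 0%R then Inf
  else Fin (\max_(k < `|a|%N.+1 | (b ^ k %| `|a|%N)%N) (k : nat)).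

Fixpoint psum (b : nat) (x : int) (a : nat -> int) (i : nat) : enat :=
  match i with
  | 0 => Fin 0
  | i'.+1 => eadd (psum b x a i') (ord_b b (x - a i')%R)
  end.

Definition is_b_ordering (b : nat) (S : int -> Prop) (a : nat -> int) : Prop :=
  (forall i, S (a i)) /\
  (forall i, (1 <= i)%N -> forall a', S a' -> ele (psum b (a i) a i) (psum b a' a i)).

(* alpha_k(S,b) computed from the b-ordering a of S. *)
Definition alpha_of (b : nat) (a : nat -> int) (k : nat) : enat := psum b (a k) a k.

(* Everything rests on one inequality: if R is the initial segment of length k
   of a b-ordering of S, then every list Y of at most k integers admits some
   s in S with sum_(y in Y) ord_b(s - y) <= alpha_k(S,b).  Taking for Y
   initial segments of b-orderings gives (1), (2) and (3) at once.
   The inequality is proved by splitting along residues mod b: for x, y both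
   congruent to r, ord_b(x - y) = 1 + ord_b(x/b - y/b), so the part of a
   b-ordering lying in the class of r, divided by b, is again a b-ordering of
   the rescaled class.  A pigeonhole argument on residues finds a pivot of R
   whose class holds at least as many earlier points of R as points of Y, and
   one recurses in that class, where alpha + k has decreased. *)
From HB Require Import structures.
From mathcomp Require Import all_boot all_order all_algebra.
From mathcomp Require Import zify ring.
Set Implicit Arguments. Unset Strict Implicit. Unset Printing Implicit Defensive.
Import Order.TTheory GRing.Theory Num.Theory.

Lemma eaddA : associative eadd.
Proof. by case=> [m|] [n|] [p|] //=; rewrite addnA. Qed.

Lemma eaddC : commutative eadd.
Proof. by case=> [m|] [n|] //=; rewrite addnC. Qed.

Lemma add0e : left_id (Fin 0) eadd.
Proof. by case. Qed.

HB.instance Definition _ := Monoid.isComLaw.Build enat (Fin 0) eadd eaddA eaddC add0e.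

Lemma ele_refl x : ele x x.
Proof. by case: x => /=. Qed.

Lemma ele_trans : transitive ele.
Proof. by case=> [n|] [m|] [p|] //=; apply: leq_trans. Qed.

Lemma ele_Inf x : ele x Inf.
Proof. by case: x. Qed.

Lemma ele0 x : ele (Fin 0) x.
Proof. by case: x. Qed.

Lemma ele_add x x' y y' : ele x x' -> ele y y' -> ele (eadd x y) (eadd x' y').
Proof. by case: x x' y y' => [?|] [?|] [?|] [?|] //=; apply: leq_add. Qed.

Lemma ele_addl x y : ele y (eadd x y).
Proof. by rewrite -{1}[y]add0e; apply: ele_add (ele0 x) (ele_refl y). Qed.

Lemma ele_addr x y : ele x (eadd x y).
Proof. by rewrite eaddC; apply: ele_addl. Qed.

Lemma ele_add2l m x y : ele (eadd (Fin m) x) (eadd (Fin m) y) = ele x y.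
Proof. by case: x y => [?|] [?|] //=; rewrite leq_add2l. Qed.

Lemma split_count (T : Type) (P : pred T) (s : seq T) m : m < count P s ->
  exists s1 x s2, [/\ s = s1 ++ x :: s2, P x & count P s2 = m].
Proof.
elim: s => [|x s IH] //=; case Px: (P x) => /=; last first.
  by move/IH=> [s1 [y [s2 [-> Py cnt_s2]]]]; exists (x :: s1), y, s2.
rewrite ltnS leq_eqVlt => /predU1P[-> | /IH[s1 [y [s2 [-> Py cnt_s2]]]]].
  by exists [::], x, s.
by exists (x :: s1), y, s2.
Qed.

Lemma perm_count_leq (T : eqType) (s1 s2 : seq T) : size s2 <= size s1 ->
  (forall x, count_mem x s1 <= count_mem x s2) -> perm_eq s1 s2.
Proof.
move=> le_s21 /count_subseqP[s sub_s2 pe_s1]; suff /eqP <- : s == s2 by [].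
rewrite -(size_subseq_leqif sub_s2).2 eqn_leq size_subseq //=.
by rewrite -(perm_size pe_s1).
Qed.

Section Valuation.
Variable b : nat.
Hypothesis hb : 1 < b.

Lemma ord_bP a : a != 0%R ->
  exists2 m, ord_b b a = Fin m & forall n, (b ^ n %| `|a|) = (n <= m).
Proof.
move=> a0; rewrite /ord_b (negbTE a0).
set P := fun k : 'I_`|a|.+1 => b ^ k %| `|a|.
have P0 : P ord0 by rewrite /P expn0 dvd1n.
rewrite (bigop.bigmax_eq_arg ord0 P0); case: arg_maxnP => //= m Pm m_max.
exists m => // n; apply/idP/idP => [Pn | le_nm]; last first.
  exact: dvdn_trans (dvdn_exp2l b le_nm) Pm.
have n_small : n < `|a|.+1.
  by rewrite ltnS (leq_trans (ltnW (ltn_expl n hb))) // dvdn_leq // absz_gt0.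
exact: (m_max (Ordinal n_small)).
Qed.

Lemma ord_b_mulb z : ord_b b (z * b%:Z)%R = eadd (Fin 1) (ord_b b z).
Proof.
have [->|z0] := eqVneq z 0%R; first by rewrite mul0r /ord_b eqxx.
have zb0 : (z * b%:Z != 0)%R by rewrite mulf_neq0 // eqz_nat -lt0n ltnW.
have [m -> dvd_z] := ord_bP z0; have [m' -> dvd_zb] := ord_bP zb0.
have shift n : (n.+1 <= m') = (n <= m).
  by rewrite -dvd_zb -dvd_z abszM expnSr dvdn_pmul2r // ltnW.
congr Fin; apply/eqP; rewrite add1n eqn_leq shift leqnn andbT.
by case: m' {dvd_zb} shift => // m' shift; rewrite ltnS -shift.
Qed.

Lemma ord_b_ndvd z : ~~ (b %| `|z|) -> ord_b b z = Fin 0.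
Proof.
move=> ndvd; have z0 : z != 0%R by apply: contraNneq ndvd => ->.
have [m -> dvd_z] := ord_bP z0.
by move: ndvd; rewrite -{1}[b]expn1 dvd_z; case: m {dvd_z}.
Qed.

End Valuation.

Section Residues.
Variable b : nat.
Hypothesis hb : 1 < b.
Local Open Scope ring_scope.

Definition ord_sum (x : int) (R : seq int) : enat :=
  \big[eadd/Fin 0]_(y <- R) ord_b b (x - y).

Definition fiber (S : int -> Prop) (r : int) : int -> Prop :=
  fun x => S (x * b%:Z + r).

Definition fiber_seq (r : int) (R : seq int) : seq int :=
  [seq (y %/ b)%Z | y <- R & (y %% b)%Z == r].

Let b_gt0 : 0 < b%:Z.
Proof. by rewrite ltz_nat ltnW. Qed.

Lemma ord_sum_nil x : ord_sum x [::] = Fin 0.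
Proof. exact: big_nil. Qed.

Lemma ord_sum_cons x y R : ord_sum x (y :: R) = eadd (ord_b b (x - y)) (ord_sum x R).
Proof. exact: big_cons. Qed.

Lemma ord_sum_cat x R1 R2 :
  ord_sum x (R1 ++ R2) = eadd (ord_sum x R1) (ord_sum x R2).
Proof. exact: big_cat. Qed.

Lemma modz_range x : 0 <= (x %% b)%Z < b%:Z.
Proof. by rewrite modz_ge0 ?ltz_pmod ?gt_eqF. Qed.

Lemma modz_fiber x r : 0 <= r < b%:Z -> ((x * b%:Z + r) %% b)%Z = r.
Proof. by move=> r_range; rewrite modzMDl modz_small. Qed.

Lemma divz_fiber x r : 0 <= r < b%:Z -> ((x * b%:Z + r) %/ b)%Z = x.
Proof.
by move=> r_range; rewrite divzMDl ?gt_eqF // divz_small ?addr0.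
Qed.

Lemma fiber_seq_cons r y R : fiber_seq r (y :: R) =
  if (y %% b)%Z == r then (y %/ b)%Z :: fiber_seq r R else fiber_seq r R.
Proof. by rewrite /fiber_seq /=; case: ifP. Qed.

Lemma size_fiber_seq r R :
  size (fiber_seq r R) = count_mem r [seq (y %% b)%Z | y <- R].
Proof. by rewrite size_map size_filter count_map. Qed.

Lemma ord_sum_fiber x R : ord_sum x R =
  eadd (Fin (size (fiber_seq (x %% b)%Z R)))
       (ord_sum (x %/ b)%Z (fiber_seq (x %% b)%Z R)).
Proof.
elim: R => [|y R IH]; first by rewrite !ord_sum_nil.
rewrite fiber_seq_cons ord_sum_cons IH.
case: ifP => [/eqP y_x | y_x]; last first.
  rewrite ord_b_ndvd ?add0e //.
  by rewrite -[b]/(`|b%:Z|%N) -dvdzE -eqz_mod_dvd eq_sym y_x.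
have -> : x - y = ((x %/ b)%Z - (y %/ b)%Z) * b%:Z.
  by rewrite {1}(divz_eq x b) {1}(divz_eq y b) y_x; ring.
rewrite ord_b_mulb // ord_sum_cons /=.
by case: ord_b => [m|]; case: ord_sum => [n|] //=; congr Fin; lia.
Qed.

(* The list R is read backwards: its head is the point chosen last. *)
Fixpoint greedy (S : int -> Prop) (R : seq int) : Prop :=
  if R is y :: R' then
    [/\ greedy S R', S y & forall x, S x -> ele (ord_sum y R') (ord_sum x R')]
  else True.

Lemma greedy_catr S R1 R2 : greedy S (R1 ++ R2) -> greedy S R2.
Proof. by elim: R1 => //= y R1 IH [/IH]. Qed.

Lemma greedy_fiber S r R : 0 <= r < b%:Z ->
  greedy S R -> greedy (fiber S r) (fiber_seq r R).
Proof.
move=> r_range; elim: R => //= y R IH [gR Sy y_min]; rewrite fiber_seq_cons.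
case: ifP => [/eqP y_r | _]; last exact: IH.
split; [exact: IH | by rewrite /fiber -y_r -divz_eq | move=> x' Sx'].
have := y_min _ Sx'.
rewrite [ord_sum y _]ord_sum_fiber [ord_sum (_ + _) _]ord_sum_fiber.
by rewrite y_r modz_fiber // divz_fiber // ele_add2l.
Qed.

Lemma greedy_pivot S x0 R Y : greedy S (x0 :: R) -> (size Y <= size R)%N ->
  exists z L, [/\ greedy S (z :: L),
    (size (fiber_seq (z %% b)%Z Y) <= size (fiber_seq (z %% b)%Z L))%N
    & ele (ord_sum z L) (ord_sum x0 R)].
Proof.
move=> gx0R le_YR; have [gR Sx0 _] := gx0R.
pose res (L : seq int) := [seq (y %% b)%Z | y <- L].
pose fewer y := (count_mem (y %% b)%Z (res Y) < count_mem (y %% b)%Z (res R))%N.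
have [/hasP[y0 _] | /hasPn R_le] := boolP (has fewer R).
  (* Pivot at the point y of the class of y0 that was chosen after exactly as
     many points of that class as Y contains. *)
  rewrite /fewer [X in (_ < X)%N]count_map.
  case/split_count=> [R2 [y [R1 [def_R /eqP y_y0 cnt_R1]]]].
  have gyR1 : greedy S (y :: R1) by apply: (@greedy_catr S R2); rewrite -def_R.
  exists y, R1; split=> //.
    by rewrite !size_fiber_seq y_y0 !count_map cnt_R1 /res count_map.
  have [_ _ y_min] := gyR1; apply: ele_trans (y_min _ Sx0) _.
  rewrite def_R ord_sum_cat ord_sum_cons.
  exact: ele_trans (ele_addl _ _) (ele_addl _ _).
(* Otherwise R and Y have the same residues with multiplicities. *)
exists x0, R; split; rewrite ?ele_refl // !size_fiber_seq.
suff /permP -> : perm_eq (res R) (res Y) by [].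
apply: perm_count_leq => [|k]; first by rewrite !size_map.
have [/mapP[y yR ->] | kR] := boolP (k \in res R); first by rewrite leqNgt (R_le y yR).
by rewrite (count_memPn kR).
Qed.

Lemma greedy_min_le_rec N S x0 R Y : greedy S (x0 :: R) -> (size Y <= size R)%N ->
  ele (eadd (ord_sum x0 R) (Fin (size R))) (Fin N) ->
  exists2 x, S x & ele (ord_sum x Y) (ord_sum x0 R).
Proof.
elim: N S x0 R Y => [|N IH] S x0 R Y gx0R le_YR bound.
  case: Y le_YR => [|y Y] /= le_YR.
    by exists x0; [case: gx0R | rewrite ord_sum_nil ele0].
  by case: ord_sum bound => //= n; lia.
have [-> | Yn0] := eqVneq Y [::].
  by exists x0; [case: gx0R | rewrite ord_sum_nil ele0].
have R_gt0 : (0 < size R)%N by rewrite (leq_trans _ le_YR) // lt0n size_eq0.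
have [z [L [gzL le_YL zL_le]]] := greedy_pivot gx0R le_YR.
have r_range := modz_range z; set r := (z %% b)%Z in le_YL r_range.
have [x' Sx' x'_le] : exists2 x', fiber S r x' &
    ele (ord_sum x' (fiber_seq r Y)) (ord_sum (z %/ b)%Z (fiber_seq r L)).
  (* The measure drops: it becomes ord_sum z L <= ord_sum x0 R, and R <> [::]. *)
  apply: IH le_YL _.
    by have := greedy_fiber r_range gzL; rewrite fiber_seq_cons eqxx.
  rewrite eaddC -ord_sum_fiber; apply: ele_trans zL_le _.
  by case: ord_sum bound => //= n; lia.
exists (x' * b%:Z + r) => //; apply: ele_trans zL_le.
rewrite ord_sum_fiber modz_fiber // divz_fiber // [ord_sum z L]ord_sum_fiber.
by apply: ele_add x'_le.
Qed.

Lemma greedy_min_le S x0 R Y : greedy S (x0 :: R) -> (size Y <= size R)%N ->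
  exists2 x, S x & ele (ord_sum x Y) (ord_sum x0 R).
Proof.
move=> gx0R le_YR; case E: (ord_sum x0 R) => [n|]; last first.
  by exists x0; [case: gx0R | apply: ele_Inf].
rewrite -E; apply: (@greedy_min_le_rec (n + size R)) => //.
by rewrite E /=.
Qed.

Lemma psumE x a k : psum b x a k = ord_sum x (rev (mkseq a k)).
Proof.
elim: k => [|k IH] /=; first by rewrite ord_sum_nil.
by rewrite mkseqS rev_rcons ord_sum_cons -IH eaddC.
Qed.

Lemma greedy_b_ordering S a k : is_b_ordering b S a -> greedy S (rev (mkseq a k)).
Proof.
case=> Sa a_min; elim: k => [|k IH] //; rewrite mkseqS rev_rcons; split => // x Sx.
case: k {IH} => [|k]; first by rewrite ord_sum_nil ele0.
by rewrite -!psumE; apply: a_min.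
Qed.

Lemma alpha_le_psum S a k x : is_b_ordering b S a -> S x ->
  ele (alpha_of b a k) (psum b x a k).
Proof.
move=> ordS Sx; have := greedy_b_ordering k.+1 ordS.
by rewrite mkseqS rev_rcons /alpha_of !psumE => -[_ _]; apply.
Qed.

Lemma exists_ord_sum_le_alpha S a k Y : is_b_ordering b S a -> (size Y <= k)%N ->
  exists2 x, S x & ele (ord_sum x Y) (alpha_of b a k).
Proof.
move=> ordS le_Yk; have := greedy_b_ordering k.+1 ordS.
rewrite mkseqS rev_rcons /alpha_of psumE => /greedy_min_le; apply.
by rewrite size_rev size_mkseq.
Qed.

End Residues.

Theorem proposition5p4 (b : nat) (hb : (2 <= b)%N) :
  (forall (S : int -> Prop) (a : nat -> int),
      (exists x, S x) -> is_b_ordering b S a ->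
      forall k : nat, ele (alpha_of b a k) (alpha_of b a k.+1)) /\
  (forall (S : int -> Prop) (a : nat -> int),
      (exists x, S x) -> is_b_ordering b S a ->
      forall k l : nat,
        ele (eadd (alpha_of b a k) (alpha_of b a l)) (alpha_of b a (k + l))) /\
  (forall (S1 S2 : int -> Prop) (a1 a2 : nat -> int),
      (exists x, S1 x) -> (forall x, S1 x -> S2 x) ->
      is_b_ordering b S1 a1 -> is_b_ordering b S2 a2 ->
      forall k : nat, ele (alpha_of b a2 k) (alpha_of b a1 k)).
Proof.
split; [|split].
- move=> S a _ ordS k; have [Sa _] := ordS.
  exact: ele_trans (alpha_le_psum k ordS (Sa k.+1)) (ele_addr _ _).
- move=> S a _ ordS k l.
  have [|x Sx x_le] := exists_ord_sum_le_alpha hb (k := k + l)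
    (Y := rev (mkseq a k) ++ rev (mkseq a l)) ordS.
    by rewrite size_cat !size_rev !size_mkseq.
  apply: ele_trans x_le; rewrite ord_sum_cat -!psumE.
  exact: ele_add (alpha_le_psum k ordS Sx) (alpha_le_psum l ordS Sx).
- move=> S1 S2 a1 a2 _ S12 ord1 ord2 k.
  have [|x S1x x_le] := exists_ord_sum_le_alpha hb (k := k) (Y := rev (mkseq a2 k)) ord1.
    by rewrite size_rev size_mkseq.
  by apply: ele_trans (alpha_le_psum k ord2 (S12 _ S1x)) _; rewrite psumE.
Qed.
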